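(* Let $q=2^m$ and $\mu_{q+1}=\{\delta\in\mathbb{F}_{q^2}:\delta^{q+1}=1\}$. The map $x\mapsto \dfrac{x^q}{1+x^{1+q}}$ is exactly 2-to-1 on $\mathbb{F}_{q^2}^{*}\setminus\mu_{q+1}$: for $s,t\in\mathbb{F}_{q^2}^{*}\setminus\mu_{q+1}$ one has $\frac{s^q}{1+s^{1+q}}=\frac{t^q}{1+t^{1+q}}$ if and only if $t=s$ or $t=s^{-q}$, and these two values are distinct. *)

From HB Require Import structures.
From mathcomp Require Import all_boot all_order all_algebra all_field.
Set Implicit Arguments. Unset Strict Implicit. Unset Printing Implicit Defensive.
Import GRing.Theory.
Local Open Scope ring_scope.

Definition qmap (F : fieldType) (q : nat) (x : F) : F :=
  x ^+ q / (1 + x ^+ (1 + q)).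

Definition in_mu (F : fieldType) (q : nat) (x : F) : bool := x ^+ q.+1 == 1.

From HB Require Import structures.
From mathcomp Require Import all_boot all_order all_algebra all_field.
From mathcomp Require Import ring.
Set Implicit Arguments.
Unset Strict Implicit.
Import GRing.Theory.
Local Open Scope ring_scope.

(* In characteristic 2 with x |-> x^q an involutive Frobenius power, the norm
   N x = x^(q+1) is Frobenius-fixed.  Writing a = N s, b = N t, the equation
   qmap s = qmap t reads s^q (1 + b) = t^q (1 + a); applying Frobenius gives
   s (1 + b) = t (1 + a), and multiplying the two yields
   a (1 + b)^2 = b (1 + a)^2, i.e. (a - b)(1 - a b) = 0.  The factor a = b
   forces t = s, the factor a b = 1 forces t = s^(-q). *)

Lemma eq_or_mul_eq1 (R : idomainType) (a b : R) :
  a * (1 + b) ^+ 2 = b * (1 + a) ^+ 2 -> a = b \/ a * b = 1.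
Proof.
move=> /eqP; rewrite -subr_eq0.
have -> : a * (1 + b) ^+ 2 - b * (1 + a) ^+ 2 = (a - b) * (1 - a * b) by ring.
rewrite mulf_eq0 !subr_eq0 => /orP[/eqP-> | /eqP<-]; by [left | right].
Qed.

Section FrobeniusInvolution.

Variables (F : fieldType) (q : nat).
Hypotheses (pchar2F : 2 \in [pchar F]) (q_pcharnat : [pchar F].-nat q).
Hypothesis frobK : forall x : F, x ^+ q ^+ q = x.

Lemma frobD (x y : F) : (x + y) ^+ q = x ^+ q + y ^+ q.
Proof. exact: exprDn_pchar. Qed.

Lemma frob_norm (x : F) : (x ^+ q.+1) ^+ q = x ^+ q.+1.
Proof. by rewrite exprS exprMn frobK mulrC. Qed.

Lemma qmapE (x : F) : qmap q x = x ^+ q / (1 + x ^+ q.+1).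
Proof. by rewrite /qmap add1n. Qed.

Lemma qmap_denom_neq0 (x : F) : ~~ in_mu q x -> 1 + x ^+ q.+1 != 0.
Proof. by apply: contra; rewrite addr_eq0 oppr_pchar2 // eq_sym. Qed.

Lemma qmap_eq_cross (s t : F) : ~~ in_mu q s -> ~~ in_mu q t ->
  qmap q s = qmap q t -> s ^+ q * (1 + t ^+ q.+1) = t ^+ q * (1 + s ^+ q.+1).
Proof.
move=> /qmap_denom_neq0 ns /qmap_denom_neq0 nt; rewrite !qmapE => st.
by apply/eqP; rewrite -eqr_div // st.
Qed.

Lemma qmap_eq_frob (s t : F) : ~~ in_mu q s -> ~~ in_mu q t ->
  qmap q s = qmap q t -> s * (1 + t ^+ q.+1) = t * (1 + s ^+ q.+1).
Proof.
move=> ms mt /(qmap_eq_cross ms mt)/(congr1 (fun z => z ^+ q)).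
by rewrite !exprMn !frobD !expr1n !frob_norm !frobK.
Qed.

Lemma qmap_eq_cases (s t : F) : s != 0 -> ~~ in_mu q s -> ~~ in_mu q t ->
  qmap q s = qmap q t -> t = s \/ t = (s ^+ q)^-1.
Proof.
move=> s0 ms mt st; have Sq0 : s ^+ q != 0 by rewrite expf_neq0.
have ns := qmap_denom_neq0 ms.
have E1 := qmap_eq_cross ms mt st; have E2 := qmap_eq_frob ms mt st.
have normsE : s ^+ q.+1 * (1 + t ^+ q.+1) ^+ 2 = t ^+ q.+1 * (1 + s ^+ q.+1) ^+ 2.
  transitivity (s ^+ q * (1 + t ^+ q.+1) * (s * (1 + t ^+ q.+1))).
    by rewrite [s ^+ q.+1]exprS; ring.
  by rewrite E1 E2 [t ^+ q.+1]exprS; ring.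
case: (eq_or_mul_eq1 normsE) => [ab | ab1].
  by left; apply/(mulIf ns); rewrite -E2 ab.
right; apply: (mulfI Sq0); rewrite mulfV //; apply: (mulIf ns).
have -> : s ^+ q * t * (1 + s ^+ q.+1) = s ^+ q * (s * (1 + t ^+ q.+1)).
  by rewrite E2 mulrA.
by rewrite mulrA [s ^+ q * s]mulrC -exprS mulrDr mulr1 ab1 mul1r addrC.
Qed.

Lemma qmap_frobV (x : F) : x != 0 -> ~~ in_mu q x ->
  qmap q ((x ^+ q)^-1) = qmap q x.
Proof.
move=> x0 /qmap_denom_neq0; rewrite !qmapE !exprVn !exprS frobK => nx.
have Xq0 : x ^+ q != 0 by rewrite expf_neq0.
by field; rewrite Xq0 x0 nx.
Qed.

Lemma frobV_neq (x : F) : x != 0 -> ~~ in_mu q x -> x != (x ^+ q)^-1.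
Proof.
by move=> x0; apply: contra => /eqP h; rewrite /in_mu exprS {1}h mulVf ?expf_neq0.
Qed.

End FrobeniusInvolution.

Theorem mainTheorem7 (m : nat) (F : finFieldType)
  (hF : #|F| = ((2 ^ m) ^ 2)%N) (s t : F) :
  let q := (2 ^ m)%N in
  s != 0 -> ~~ in_mu q s -> t != 0 -> ~~ in_mu q t ->
  (qmap q s = qmap q t <-> (t = s \/ t = (s ^+ q)^-1)) /\ s != (s ^+ q)^-1.
Proof.
move=> q s0 ms _ mt.
have pchar2F : 2 \in [pchar F].
  by apply: (@card_finPcharP _ 2 (m * 2)); rewrite // hF -expnM.
have q_pcharnat : [pchar F].-nat q by rewrite pnatX pnatE ?pchar2F.
have frobK (x : F) : x ^+ q ^+ q = x.
  by rewrite -exprM -[RHS](expf_card x) hF /q expnS expn1.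
split; last exact: frobV_neq.
split; first exact: qmap_eq_cases.
by case=> ->; rewrite ?qmap_frobV.
Qed.
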